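(* Let $S$ be a strongly $E^*$-unitary inverse semigroup with pure grading $\varphi:S^\times\to G$ and idempotent semilattice $E$. Then $(\{\mathcal T_c(E_g)\}_{g\in G},\{\hat\phi_g\}_{g\in G})$ is a partial action of $G$ on the generalized Boolean algebra $\mathcal T_c(E)$.
   Context: A generalized Boolean algebra is a distributive, relatively complemented lattice with least element $0$; an ideal is a subset closed under joins and under meets with arbitrary elements. A partial action of a group $G$ (identity $e$) on $\mathcal B$ is a family of ideals $\mathcal I_t$ and generalized Boolean algebra isomorphisms $\phi_t:\mathcal I_{t^{-1}}\to\mathcal I_t$ with (i) $\mathcal I_e=\mathcal B$, $\phi_e=\mathrm{id}$; (ii) $\phi_s(\mathcal I_{s^{-1}}\cap\mathcal I_t)=\mathcal I_s\cap\mathcal I_{st}$; (iii) $\phi_s\phi_t(x)=\phi_{st}(x)$ for $x\in\mathcal I_{t^{-1}}\cap\mathcal I_{(st)^{-1}}$. Tight filters: for a meet semilattice $P$ with $0$, a filter is a subset $F$, $\emptyset\ne F\ne P$, closed upwards and under meets; $F(P)$ has the topology generated by $\{F:x\in F\}$; the tight filters $T(P)$ are the closure of the ultrafilters (maximal filters); $V^P_{(x:x_1,\dots,x_n)}=\{\xi\in T(P):x\in\xi,\ x_1,\dots,x_n\notin\xi\}$, $V^P_x=V^P_{(x:)}$; these form a basis of compact open sets, and $\mathcal T_c(P)$ is the generalized Boolean algebra of compact open subsets of $T(P)$. Inverse semigroups: $S$ is an inverse semigroup with zero, $s^*$ the unique inverse of $s$, $E$ its idempotents, a meet semilattice with $x\wedge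 y=xy$ and least element $0$ ($x\le y$ iff $x=xy$); $S^\times=S\setminus\{0\}$, $E^\times=E\setminus\{0\}$. A pure grading is a map $\varphi:S^\times\to G$ to a group with $\varphi(ab)=\varphi(a)\varphi(b)$ whenever $ab\ne0$ and $\varphi^{-1}(1_G)=E^\times$; $S$ is strongly $E^*$-unitary if it has one. For $g\in G$, $E_g=\{x\in E: x\le ss^*$ for some $s$ with $\varphi(s)=g\}$ if $\varphi^{-1}(g)\ne\emptyset$, and $E_g=\{0\}$ otherwise; $E_g$ is downward closed and $E_e=E$. The map $\phi_g:E_{g^{-1}}\to E_g$, $x\mapsto sxs^*$ for any $s$ with $\varphi(s)=g$ and $x\le s^*s$, is a well-defined meet-semilattice isomorphism. Since $E_g$ is downward closed, $\mathcal T_c(E_g)$ is identified with the set of compact open subsets of $T(E)$ contained in $\bigcup_{x\in E_g}V^E_x$ (an ideal of $\mathcal T_c(E)$), via $U\mapsto\{\xi\in T(E):\xi\cap E_g\ne\emptyset,\ \xi\cap E_g\in U\}$, sending $V^{E_g}_{(x:x_1,\dots,x_n)}\mapsto V^E_{(x:x_1,\dots,x_n)}$. The isomorphism $\phi_g$ induces a homeomorphism $T(E_{g^{-1}})\to T(E_g)$, $\xi\mapsto\phi_g(\xi)$, hence a generalized Boolean algebra isomorphism $\hat\phi_g:\mathcal T_c(E_{g^{-1}})\to\mathcal T_c(E_g)$ with $\hat\phi_g(V_{(x:x_1,\dots,x_n)})=V_{(\phi_g(x):\phi_g(x_1),\dots,\phi_g(x_n))}$. *)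

From Stdlib Require Import List.
Import ListNotations.
Set Implicit Arguments.

Record InvSemigroup := {
  car :> Type;
  smul : car -> car -> car;
  szero : car;
  sstar : car -> car;
  smul_assoc : forall a b c, smul a (smul b c) = smul (smul a b) c;
  szero_l : forall a, smul szero a = szero;
  szero_r : forall a, smul a szero = szero;
  sstar_inv1 : forall s, smul (smul s (sstar s)) s = s;
  sstar_inv2 : forall s, smul (smul (sstar s) s) (sstar s) = sstar s;
  sstar_unique : forall s t, smul (smul s t) s = s ->
                   smul (smul t s) t = t -> t = sstar s
}.

Record Grp := {
  gcar :> Type;
  gmul : gcar -> gcar -> gcar;
  gone : gcar;
  ginv : gcar -> gcar;
  gmul_assoc : forall a b c, gmul a (gmul b c) = gmul (gmul a b) c;
  gone_l : forall a, gmul gone a = a;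
  gone_r : forall a, gmul a gone = a;
  ginv_l : forall a, gmul (ginv a) a = gone;
  ginv_r : forall a, gmul a (ginv a) = gone
}.

Section Defs.
Variable S : InvSemigroup.
Variable G : Grp.

Definition is_idem (x : S) : Prop := smul S x x = x.

Definition sleq (x y : S) : Prop := x = smul S x y.

(* pure grading  phi : S^x -> G  (given as a total map; its value at 0 is irrelevant) *)
Definition pure_grading (phi : S -> G) : Prop :=
  (forall a b, smul S a b <> szero S ->
     phi (smul S a b) = gmul G (phi a) (phi b)) /\
  (forall a, a <> szero S -> (phi a = gone G <-> is_idem a)).

Definition Eg (phi : S -> G) (g : G) (x : S) : Prop :=
  ((exists s, s <> szero S /\ phi s = g) /\
     (is_idem x /\ exists s, s <> szero S /\ phi s = g /\
                     sleq x (smul S s (sstar S s))))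
  \/ (~ (exists s, s <> szero S /\ phi s = g) /\ x = szero S).

Definition phig_rel (phi : S -> G) (g : G) (x y : S) : Prop :=
  exists s, s <> szero S /\ phi s = g /\ sleq x (smul S (sstar S s) s) /\
            y = smul S (smul S s x) (sstar S s).
End Defs.

Section Tight.
Variable A : Type.
Variable m : A -> A -> A.
Variable P : A -> Prop.     (* the meet semilattice (a subset of A closed under m) *)

Definition mleq (x y : A) : Prop := x = m x y.

Definition is_filter (F : A -> Prop) : Prop :=
  (forall x, F x -> P x) /\
  (exists x, F x) /\
  (exists x, P x /\ ~ F x) /\
  (forall x y, F x -> P y -> mleq x y -> F y) /\
  (forall x y, F x -> F y -> F (m x y)).

Definition is_ultrafilter (F : A -> Prop) : Prop :=
  is_filter F /\ forall F', is_filter F' -> (forall x, F x -> F' x) ->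
                            (forall x, F' x -> F x).

(* basic open sets of the product topology of {0,1}^P restricted to filters *)
Definition basic (xs ys : list A) (F : A -> Prop) : Prop :=
  (forall x, In x xs -> F x) /\ (forall y, In y ys -> ~ F y).

(* tight filters: closure of the ultrafilters in F(P) *)
Definition is_tight (F : A -> Prop) : Prop :=
  is_filter F /\
  forall xs ys, basic xs ys F -> exists U, is_ultrafilter U /\ basic xs ys U.

Definition open_in (X U : (A -> Prop) -> Prop) : Prop :=
  (forall xi, U xi -> X xi) /\
  forall xi, U xi -> exists xs ys, basic xs ys xi /\
     forall eta, X eta -> basic xs ys eta -> U eta.

Definition compact_in (X K : (A -> Prop) -> Prop) : Prop :=
  (forall xi, K xi -> X xi) /\
  forall (I : Type) (C : I -> (A -> Prop) -> Prop),
    (forall i, open_in X (C i)) ->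
    (forall xi, K xi -> exists i, C i xi) ->
    exists l : list I, forall xi, K xi -> exists i, In i l /\ C i xi.

Definition Tc (U : (A -> Prop) -> Prop) : Prop :=
  open_in is_tight U /\ compact_in is_tight U.
End Tight.

Section PA.
Variable Pt : Type.
Definition sunion (V W : Pt -> Prop) : Pt -> Prop := fun p => V p \/ W p.
Definition sinter (V W : Pt -> Prop) : Pt -> Prop := fun p => V p /\ W p.
Definition sdiff (V W : Pt -> Prop) : Pt -> Prop := fun p => V p /\ ~ W p.
Definition sempty : Pt -> Prop := fun _ => False.

Definition is_ideal (B I : (Pt -> Prop) -> Prop) : Prop :=
  (forall V, I V -> B V) /\ I sempty /\
  (forall V W, I V -> I W -> I (sunion V W)) /\
  (forall V W, I V -> B W -> I (sinter V W)).

Definition is_gba_iso (I J : (Pt -> Prop) -> Prop) (f : (Pt -> Prop) -> (Pt -> Prop)) : Prop :=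
  (forall V, I V -> J (f V)) /\
  (forall W, J W -> exists V, I V /\ f V = W) /\
  (forall V V', I V -> I V' -> f V = f V' -> V = V') /\
  f sempty = sempty /\
  (forall V W, I V -> I W -> f (sunion V W) = sunion (f V) (f W)) /\
  (forall V W, I V -> I W -> f (sinter V W) = sinter (f V) (f W)) /\
  (forall V W, I V -> I W -> f (sdiff V W) = sdiff (f V) (f W)).

Definition is_partial_action (G : Grp) (B : (Pt -> Prop) -> Prop)
  (I : G -> (Pt -> Prop) -> Prop) (f : G -> (Pt -> Prop) -> (Pt -> Prop)) : Prop :=
  (forall g, is_ideal B (I g)) /\
  (forall g, is_gba_iso (I (ginv G g)) (I g) (f g)) /\
  (forall V, I (gone G) V <-> B V) /\
  (forall V, B V -> f (gone G) V = V) /\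
  (forall s t W, (exists V, I (ginv G s) V /\ I t V /\ f s V = W) <->
                 (I s W /\ I (gmul G s t) W)) /\
  (forall s t V, I (ginv G t) V -> I (ginv G (gmul G s t)) V ->
                 f s (f t V) = f (gmul G s t) V).
End PA.

Section Data.
Variable S : InvSemigroup.
Variable G : Grp.
Variable phi : S -> G.

Definition TcE : ((S -> Prop) -> Prop) -> Prop := Tc (smul S) (@is_idem S).
Definition TcEg (g : G) : ((S -> Prop) -> Prop) -> Prop := Tc (smul S) (@Eg S G phi g).

(* identification iota_g : T_c(E_g) -> T_c(E),
   U |-> {xi in T(E) : xi /\ E_g <> empty, xi /\ E_g in U} *)
Definition iota (g : G) (U : (S -> Prop) -> Prop) : (S -> Prop) -> Prop :=
  fun xi => is_tight (smul S) (@is_idem S) xi /\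
            (exists x, xi x /\ @Eg S G phi g x) /\
            U (fun x => xi x /\ @Eg S G phi g x).

Definition rho (g : G) (V : (S -> Prop) -> Prop) : (S -> Prop) -> Prop :=
  fun zeta => exists xi, V xi /\ (exists x, xi x /\ @Eg S G phi g x) /\
                         forall x, zeta x <-> (xi x /\ @Eg S G phi g x).

Definition hatphi (g : G) (U : (S -> Prop) -> Prop) : (S -> Prop) -> Prop :=
  fun zeta => exists xi, U xi /\
                forall y, zeta y <-> exists x, xi x /\ @phig_rel S G phi g x y.

Definition Ig (g : G) (V : (S -> Prop) -> Prop) : Prop :=
  exists U, TcEg g U /\ V = iota g U.

(* hat phi_g transported to the ideals of T_c(E) *)
Definition psi (g : G) (V : (S -> Prop) -> Prop) : (S -> Prop) -> Prop :=
  iota g (hatphi g (rho (ginv G g) V)).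
End Data.

(* Strong E*-unitarity makes the conjugation x |-> s x s^* independent of the choice of s of
   degree g: two such conjugates differ by an element of degree 1, hence by an idempotent. So
   phi_g is a well-defined order isomorphism E_(g^-1) -> E_g, compatible with products of degrees.
   Tight filters of E meeting E_g correspond to tight filters of E_g (restrict to E_g, resp. close
   upwards), and phi_g transports filters of E_(g^-1) to filters of E_g; both correspondences are
   homeomorphisms of filter spaces, so they carry compact open sets to compact open sets. Each
   psi_g is then the Boolean isomorphism induced by a bijection of points, and the partial action
   axioms reduce to identities for the relation "xi is the phi_g-image of eta" between tight
   filters. *)
From Stdlib Require Import List Classical ClassicalEpsilon FunctionalExtensionality PropExtensionality.
Import ListNotations.

Section GroupFacts.
Context {G : Grp}.
Local Notation "a ** b" := (gmul G a b) (at level 40, left associativity).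

Lemma gmul_cancel_l (a : G) {b c : G} : a ** b = a ** c -> b = c.
Proof.
  intro H. rewrite <- (gone_l G b), <- (gone_l G c), <- (ginv_l G a), <- !gmul_assoc, H.
  reflexivity.
Qed.

Lemma gmul_cancel_r (a : G) {b c : G} : b ** a = c ** a -> b = c.
Proof.
  intro H. rewrite <- (gone_r G b), <- (gone_r G c), <- (ginv_r G a), !gmul_assoc, H.
  reflexivity.
Qed.

Lemma ginv_involutive (a : G) : ginv G (ginv G a) = a.
Proof. apply (gmul_cancel_l (ginv G a)). rewrite ginv_r, ginv_l. reflexivity. Qed.

Lemma ginv_gmul (a b : G) : ginv G (a ** b) = ginv G b ** ginv G a.
Proof.
  apply (gmul_cancel_l (a ** b)).
  rewrite ginv_r, <- gmul_assoc, (gmul_assoc G b), ginv_r, gone_l, ginv_r. reflexivity.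
Qed.

Lemma ginv_gone : ginv G (gone G) = gone G.
Proof. rewrite <- (gone_l G (ginv G (gone G))). apply ginv_r. Qed.

Lemma ginv_gmulK (s t : G) : ginv G s ** (s ** t) = t.
Proof. rewrite gmul_assoc, ginv_l, gone_l. reflexivity. Qed.

Lemma gmul_ginv_gmul (s t : G) : t ** ginv G (s ** t) = ginv G s.
Proof. rewrite ginv_gmul, gmul_assoc, ginv_r, gone_l. reflexivity. Qed.
End GroupFacts.

Lemma smul_idem_r {S : InvSemigroup} (a : S) {f : S} :
  is_idem S f -> smul S (smul S a f) f = smul S a f.
Proof. intro Hf. rewrite <- smul_assoc, Hf. reflexivity. Qed.

Ltac reassoc S := repeat rewrite (smul_assoc S).
Ltac absorb H := unfold is_idem in H; repeat rewrite (smul_idem_r _ H); repeat rewrite H.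

Section InverseSemigroupFacts.
Context {S : InvSemigroup}.
Local Notation "x * y" := (smul S x y).
Local Notation "0" := (szero S).
Local Notation "x ^*" := (sstar S x) (at level 2).
Local Notation idem := (is_idem S).
Local Notation le := (sleq S).

Lemma idem_zero : idem 0.
Proof. apply szero_l. Qed.

Lemma sstar_idem {e : S} : idem e -> e^* = e.
Proof. intro He. symmetry. apply sstar_unique; rewrite !He; reflexivity. Qed.

Lemma sstar_involutive (s : S) : (s^*)^* = s.
Proof. symmetry. apply sstar_unique; [apply sstar_inv2 | apply sstar_inv1]. Qed.

Lemma idem_range (s : S) : idem (s * s^*).
Proof. unfold is_idem. rewrite smul_assoc, sstar_inv1. reflexivity. Qed.

Lemma idem_domain (s : S) : idem (s^* * s).
Proof. unfold is_idem. rewrite smul_assoc, sstar_inv2. reflexivity. Qed.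

(* The classical argument: x := (e f)^* satisfies f x e = x by uniqueness of inverses, so x is
   idempotent, and then e f is the inverse of the idempotent x, i.e. e f = x. *)
Lemma idem_smul {e f : S} : idem e -> idem f -> idem (e * f).
Proof.
  intros He Hf.
  set (x := (e * f)^*).
  assert (H1 : (e * f) * x * (e * f) = e * f) by apply sstar_inv1.
  assert (H2 : x * (e * f) * x = x) by apply sstar_inv2.
  assert (Hx : f * x * e = x).
  { unfold x at 2. apply sstar_unique.
    - transitivity (e * f * x * (e * f)); [|exact H1]. reassoc S. absorb Hf. absorb He. reflexivity.
    - replace (f * x * e * (e * f) * (f * x * e)) with (f * (x * (e * f) * x) * e)
        by (reassoc S; absorb Hf; absorb He; reflexivity).
      rewrite H2. reflexivity. }
  assert (Hxi : idem x).
  { unfold is_idem. rewrite <- Hx at 1 2.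
    replace (f * x * e * (f * x * e)) with (f * (x * (e * f) * x) * e) by (reassoc S; reflexivity).
    rewrite H2. exact Hx. }
  assert (Hef : e * f = x).
  { rewrite <- (sstar_idem Hxi). apply sstar_unique; assumption. }
  rewrite Hef. exact Hxi.
Qed.

Lemma idem_smul_comm {e f : S} : idem e -> idem f -> e * f = f * e.
Proof.
  intros He Hf.
  assert (Hef := idem_smul He Hf). assert (Hfe := idem_smul Hf He).
  rewrite <- (sstar_idem Hef). symmetry. apply sstar_unique.
  - replace (e * f * (f * e) * (e * f)) with ((e * f) * (e * f))
      by (reassoc S; absorb Hf; absorb He; reflexivity).
    exact Hef.
  - replace (f * e * (e * f) * (f * e)) with ((f * e) * (f * e))
      by (reassoc S; absorb Hf; absorb He; reflexivity).
    exact Hfe.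
Qed.

Lemma sstar_inv1_r (a s : S) : a * s * s^* * s = a * s.
Proof. rewrite <- !smul_assoc, (smul_assoc S s), sstar_inv1. reflexivity. Qed.

Lemma sstar_inv2_r (a s : S) : a * s^* * s * s^* = a * s^*.
Proof. rewrite <- !smul_assoc, (smul_assoc S (s^*)), sstar_inv2. reflexivity. Qed.

Lemma sstar_smul (s t : S) : (s * t)^* = t^* * s^*.
Proof.
  symmetry. apply sstar_unique.
  - replace (s * t * (t^* * s^*) * (s * t)) with (s * ((t * t^*) * (s^* * s)) * t)
      by (reassoc S; reflexivity).
    rewrite (idem_smul_comm (idem_range t) (idem_domain s)).
    reassoc S. rewrite sstar_inv1_r, sstar_inv1. reflexivity.
  - replace (t^* * s^* * (s * t) * (t^* * s^*)) with (t^* * ((s^* * s) * (t * t^*)) * s^*)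
      by (reassoc S; reflexivity).
    rewrite <- (idem_smul_comm (idem_range t) (idem_domain s)).
    reassoc S. rewrite sstar_inv2_r, sstar_inv2. reflexivity.
Qed.

Lemma sleq_trans {x y z : S} : le x y -> le y z -> le x z.
Proof.
  unfold sleq. intros Hxy Hyz. rewrite Hxy at 1. rewrite Hyz at 1.
  rewrite smul_assoc, <- Hxy. reflexivity.
Qed.

Lemma sleq_refl {x : S} : idem x -> le x x.
Proof. intro Hx. symmetry. exact Hx. Qed.

Lemma sleq_meet_r {x y : S} : idem y -> le (x * y) y.
Proof. intro Hy. unfold sleq. absorb Hy. reflexivity. Qed.

Lemma sleq_meet_l {x y : S} : idem x -> idem y -> le (x * y) x.
Proof. intros Hx Hy. rewrite (idem_smul_comm Hx Hy). apply sleq_meet_r, Hx. Qed.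

Lemma sleq_glb {z x y : S} : le z x -> le z y -> le z (x * y).
Proof. unfold sleq. intros Hzx Hzy. rewrite smul_assoc, <- Hzx. exact Hzy. Qed.

Lemma sleq_zero_l {y : S} : le 0 y.
Proof. unfold sleq. rewrite szero_l. reflexivity. Qed.

Lemma sleq_zero_r {x : S} : le x 0 -> x = 0.
Proof. unfold sleq. rewrite szero_r. trivial. Qed.

Lemma sstar_neq0 {s : S} : s <> 0 -> s^* <> 0.
Proof. intros Hs H0. apply Hs. rewrite <- (sstar_inv1 S s), H0, szero_r, szero_l. reflexivity. Qed.

Lemma range_neq0 {s : S} : s <> 0 -> s * s^* <> 0.
Proof. intros Hs H0. apply Hs. rewrite <- (sstar_inv1 S s), H0, szero_l. reflexivity. Qed.

Lemma smul_neq0_l {a b : S} : a * b <> 0 -> a <> 0.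
Proof. intros H H0. apply H. rewrite H0. apply szero_l. Qed.
End InverseSemigroupFacts.

Section Grading.
Context {S : InvSemigroup} {G : Grp} {phi : S -> G}.
Hypothesis Hphi : pure_grading S G phi.
Local Notation "x * y" := (smul S x y).
Local Notation "0" := (szero S).
Local Notation "x ^*" := (sstar S x) (at level 2).
Local Notation idem := (is_idem S).
Local Notation le := (sleq S).
Local Notation "a ** b" := (gmul G a b) (at level 40, left associativity).
Local Notation E := (Eg S G phi).
Local Notation rel := (phig_rel S G phi).

Lemma phi_smul {a b : S} : a * b <> 0 -> phi (a * b) = phi a ** phi b.
Proof. apply (proj1 Hphi). Qed.

Lemma phi_idem {x : S} : x <> 0 -> idem x -> phi x = gone G.
Proof. intros Hx0. apply (proj2 Hphi x Hx0). Qed.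

Lemma idem_of_phi_gone {x : S} : x <> 0 -> phi x = gone G -> idem x.
Proof. intros Hx0. apply (proj2 Hphi x Hx0). Qed.

Lemma phi_sstar {s : S} : s <> 0 -> phi (s^*) = ginv G (phi s).
Proof.
  intro Hs.
  assert (Hss : s * s^* * s <> 0) by (rewrite sstar_inv1; exact Hs).
  assert (Hphis := phi_smul Hss).
  rewrite (phi_smul (range_neq0 Hs)), sstar_inv1 in Hphis.
  apply (gmul_cancel_l (phi s)). rewrite ginv_r.
  apply (gmul_cancel_r (phi s)). rewrite gone_l. symmetry. exact Hphis.
Qed.

Lemma Eg_idem {g x} : E g x -> idem x.
Proof. intros [[_ [Hx _]] | [_ ->]]; [exact Hx | apply idem_zero]. Qed.

Lemma Eg_zero {g} : E g 0.
Proof.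
  destruct (classic (exists s, s <> 0 /\ phi s = g)) as [[s [Hs0 Hs]] | Hnone].
  - left. split; [exists s; auto |]. split; [apply idem_zero |].
    exists s. split; [exact Hs0 |]. split; [exact Hs | apply sleq_zero_l].
  - right. auto.
Qed.

Lemma Eg_intro {g x} s : s <> 0 -> phi s = g -> idem x -> le x (s * s^*) -> E g x.
Proof. intros. left. split; [exists s; auto |]. split; [assumption | exists s; auto]. Qed.

Lemma Eg_elim {g x} : E g x -> x <> 0 -> exists s, s <> 0 /\ phi s = g /\ le x (s * s^*).
Proof. intros [[_ [_ H]] | [_ Hx]] Hx0; [exact H | contradiction]. Qed.

Lemma Eg_downward {g x y} : E g x -> idem y -> le y x -> E g y.
Proof.
  intros Hx Hy Hyx. destruct (classic (y = 0)) as [-> | Hy0]; [apply Eg_zero |].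
  assert (Hx0 : x <> 0) by (intros ->; apply Hy0, sleq_zero_r, Hyx).
  destruct (Eg_elim Hx Hx0) as [s [Hs0 [Hs Hxs]]].
  apply (Eg_intro s); eauto using sleq_trans.
Qed.

Lemma Eg_gone : E (gone G) = idem.
Proof.
  apply functional_extensionality. intro x. apply propositional_extensionality. split.
  - apply Eg_idem.
  - intro Hx. destruct (classic (x = 0)) as [-> | Hx0]; [apply Eg_zero |].
    apply (Eg_intro x); auto using phi_idem.
    rewrite (sstar_idem Hx). unfold sleq. absorb Hx. reflexivity.
Qed.

Lemma domain_smul_idem {s x : S} : idem x -> le x (s^* * s) -> s^* * s * x = x.
Proof. intros Hx Hxs. rewrite <- idem_smul_comm; auto using idem_domain. Qed.

Lemma phig_rel_witness {g x y} : idem x -> rel g x y ->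
  exists s, s <> 0 /\ phi s = g /\ le x (s^* * s) /\ y = s * x * s^* /\
            s^* * y * s = x /\ le y (s * s^*).
Proof.
  intros Hx [s [Hs0 [Hs [Hxs ->]]]]. exists s. repeat split; auto.
  - replace (s^* * (s * x * s^*) * s) with ((s^* * s) * x * (s^* * s)) by (reassoc S; reflexivity).
    rewrite domain_smul_idem by auto. symmetry. exact Hxs.
  - unfold sleq. reassoc S. rewrite sstar_inv2_r. reflexivity.
Qed.

Lemma phig_rel_neq0 {g x y} : idem x -> x <> 0 -> rel g x y -> y <> 0.
Proof.
  intros Hx Hx0 Hr. destruct (phig_rel_witness Hx Hr) as [s [_ [_ [_ [_ [Hback _]]]]]].
  intros ->. apply Hx0. rewrite <- Hback, szero_r, szero_l. reflexivity.
Qed.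

Lemma phig_rel_total g {x} : idem x -> x <> 0 -> E (ginv G g) x -> exists y, rel g x y.
Proof.
  intros Hx Hx0 HE. destruct (Eg_elim HE Hx0) as [t [Ht0 [Ht Hxt]]].
  exists (t^* * x * t^*^*), (t^*). repeat split.
  - apply sstar_neq0, Ht0.
  - rewrite phi_sstar, Ht by exact Ht0. apply ginv_involutive.
  - rewrite sstar_involutive. exact Hxt.
Qed.

Lemma phig_rel_range {g x y} : idem x -> rel g x y -> idem y /\ E g y.
Proof.
  intros Hx Hr. destruct (phig_rel_witness Hx Hr) as [s [Hs0 [Hs [Hxs [-> [_ Hys]]]]]].
  assert (Hy : idem (s * x * s^*)).
  { unfold is_idem.
    replace (s * x * s^* * (s * x * s^*)) with (s * (x * (s^* * s)) * x * s^*) by (reassoc S; reflexivity).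
    rewrite <- Hxs. reassoc S. absorb Hx. reflexivity. }
  split; [exact Hy | apply (Eg_intro s); auto].
Qed.

Lemma phig_rel_ginv {g x y} : idem x -> rel g x y -> rel (ginv G g) y x.
Proof.
  intros Hx Hr. destruct (phig_rel_witness Hx Hr) as [s [Hs0 [Hs [_ [_ [Hback Hys]]]]]].
  exists (s^*). repeat split.
  - apply sstar_neq0, Hs0.
  - rewrite phi_sstar, Hs by exact Hs0. reflexivity.
  - rewrite sstar_involutive. exact Hys.
  - rewrite sstar_involutive. symmetry. exact Hback.
Qed.

(* For witnesses s, r of the same degree, e := s x r^* has degree 1, hence is idempotent, and
   s x s^* = e e^* = e = e^* e = r x r^*. *)
Lemma phig_rel_functional {g x y y'} : idem x -> x <> 0 -> rel g x y -> rel g x y' -> y = y'.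
Proof.
  intros Hx Hx0 Hr Hr'.
  assert (Hy0 := phig_rel_neq0 Hx Hx0 Hr).
  destruct Hr as [s [Hs0 [Hs [Hxs ->]]]]. destruct Hr' as [r [Hr0 [Hrg [Hxr ->]]]].
  set (e := s * x * r^*).
  assert (He_star : e^* = r * x * s^*).
  { unfold e. rewrite !sstar_smul, sstar_involutive, (sstar_idem Hx). reassoc S. reflexivity. }
  assert (He_range : e * e^* = s * x * s^*).
  { rewrite He_star. unfold e.
    replace (s * x * r^* * (r * x * s^*)) with (s * (x * (r^* * r)) * x * s^*) by (reassoc S; reflexivity).
    rewrite <- Hxr. reassoc S. absorb Hx. reflexivity. }
  assert (He_domain : e^* * e = r * x * r^*).
  { rewrite He_star. unfold e.
    replace (r * x * s^* * (s * x * r^*)) with (r * (x * (s^* * s)) * x * r^*) by (reassoc S; reflexivity).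
    rewrite <- Hxs. reassoc S. absorb Hx. reflexivity. }
  assert (He0 : e <> 0) by (intro He; apply Hy0; rewrite <- He_range, He; apply szero_l).
  assert (Hsx0 : s * x <> 0) by exact (smul_neq0_l He0).
  assert (He_idem : idem e).
  { apply idem_of_phi_gone; [exact He0 |]. unfold e.
    rewrite (phi_smul He0), (phi_smul Hsx0), (phi_idem Hx0 Hx), (phi_sstar Hr0).
    rewrite Hs, Hrg, gone_r, ginv_r. reflexivity. }
  rewrite (sstar_idem He_idem) in He_range, He_domain. congruence.
Qed.

Lemma phig_rel_monotone {g x y w v} : idem x -> idem w -> w <> 0 -> le w x ->
  rel g x y -> rel g w v -> le v y.
Proof.
  intros Hx Hw Hw0 Hwx [s [Hs0 [Hs [Hxs ->]]]] Hr.
  assert (Hws : le w (s^* * s)) by exact (sleq_trans Hwx Hxs).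
  assert (Hv : v = s * w * s^*) by (apply (phig_rel_functional Hw Hw0 Hr); exists s; auto).
  subst v.
  unfold sleq.
  replace (s * w * s^* * (s * x * s^*)) with (s * (w * (s^* * s)) * x * s^*) by (reassoc S; reflexivity).
  rewrite <- Hws. unfold sleq in Hwx. rewrite <- (smul_assoc S s w x), <- Hwx. reflexivity.
Qed.

Lemma phig_rel_comp {s t x y z} : idem x -> x <> 0 -> rel t x y -> rel s y z -> rel (s ** t) x z.
Proof.
  intros Hx Hx0 Hxy Hyz.
  assert (Hy0 := phig_rel_neq0 Hx Hx0 Hxy).
  destruct (phig_rel_range Hx Hxy) as [Hy _].
  assert (Hz0 := phig_rel_neq0 Hy Hy0 Hyz).
  destruct (phig_rel_witness Hx Hxy) as [u [Hu0 [Hu [Hxu [Hyu [Hback Hyu']]]]]].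
  destruct (phig_rel_witness Hy Hyz) as [v [Hv0 [Hv [Hyv [Hzv _]]]]].
  assert (Hz : z = v * u * x * (v * u)^*) by (rewrite sstar_smul, Hzv, Hyu; reassoc S; reflexivity).
  assert (Hvu0 : v * u <> 0) by (intro H0; apply Hz0; rewrite Hz, H0, !szero_l; reflexivity).
  exists (v * u). repeat split; auto.
  - rewrite phi_smul, Hv, Hu by exact Hvu0. reflexivity.
  - rewrite sstar_smul. unfold sleq. rewrite <- Hback at 2.
    replace (u^* * y * u * (u^* * v^* * (v * u))) with (u^* * ((y * (u * u^*)) * (v^* * v)) * u)
      by (reassoc S; reflexivity).
    rewrite <- Hyu', <- Hyv. symmetry. exact Hback.
Qed.

Lemma phig_rel_Eg_gmul {g t x y} : idem x -> rel g x y -> E t x -> E (g ** t) y.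
Proof.
  intros Hx Hr Ht.
  destruct (classic (x = 0)) as [-> | Hx0].
  { destruct Hr as [s [_ [_ [_ ->]]]]. rewrite szero_r, szero_l. apply Eg_zero. }
  destruct (phig_rel_range Hx Hr) as [Hy _].
  assert (Hy0 := phig_rel_neq0 Hx Hx0 Hr).
  destruct (Eg_elim Ht Hx0) as [r [Hr0 [Hrt Hxr]]].
  destruct (phig_rel_witness Hx Hr) as [s [Hs0 [Hs [Hxs [Hys _]]]]].
  assert (Hle : le y ((s * r) * (s * r)^*)).
  { rewrite sstar_smul. unfold sleq. rewrite Hys.
    replace (s * x * s^* * (s * r * (r^* * s^*))) with (s * (x * (s^* * s)) * (r * r^*) * s^*)
      by (reassoc S; reflexivity).
    rewrite <- Hxs. unfold sleq in Hxr. rewrite <- (smul_assoc S s x (r * r^*)), <- Hxr. reflexivity. }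
  assert (Hsr0 : s * r <> 0) by (intro H0; apply Hy0; rewrite Hle, H0, szero_l, szero_r; reflexivity).
  apply (Eg_intro (s * r)); auto. rewrite phi_smul, Hs, Hrt by exact Hsr0. reflexivity.
Qed.

Lemma phig_rel_gone {x y} : idem x -> x <> 0 -> (rel (gone G) x y <-> y = x).
Proof.
  intros Hx Hx0. split.
  - intros [s [Hs0 [Hs [Hxs ->]]]].
    assert (Hs_idem : idem s) by (apply idem_of_phi_gone; auto).
    rewrite (sstar_idem Hs_idem) in Hxs |- *.
    unfold sleq in Hxs. unfold is_idem in Hs_idem. rewrite Hs_idem in Hxs.
    rewrite (idem_smul_comm Hs_idem Hx), (smul_idem_r _ Hs_idem). symmetry. exact Hxs.
  - intros ->. exists x. repeat split; auto using phi_idem.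
    + rewrite (sstar_idem Hx). unfold sleq. absorb Hx. reflexivity.
    + rewrite (sstar_idem Hx). absorb Hx. reflexivity.
Qed.
End Grading.

Definition filter_prop {B : Type} (P : B -> Prop) (l : list B) : list B :=
  filter (fun b => if excluded_middle_informative (P b) then true else false) l.

Lemma filter_prop_In {B : Type} (P : B -> Prop) l b : In b (filter_prop P l) <-> In b l /\ P b.
Proof.
  unfold filter_prop. rewrite filter_In.
  destruct (excluded_middle_informative (P b)); intuition congruence.
Qed.

Lemma pred_ext {B : Type} (p q : B -> Prop) : (forall x, p x <-> q x) -> p = q.
Proof.
  intro H. apply functional_extensionality. intro x. apply propositional_extensionality, H.
Qed.

Section FilterSpaces.
Context {A : Type} {m : A -> A -> A}.

Lemma filter_sub {P F x} : is_filter m P F -> F x -> P x.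
Proof. intros [H _]. apply H. Qed.

Lemma filter_inhabited {P F} : is_filter m P F -> exists x, F x.
Proof. intros [_ [H _]]. exact H. Qed.

Lemma filter_up {P F x y} : is_filter m P F -> F x -> P y -> mleq m x y -> F y.
Proof. intros [_ [_ [_ [H _]]]]. apply H. Qed.

Lemma filter_meet {P F x y} : is_filter m P F -> F x -> F y -> F (m x y).
Proof. intros [_ [_ [_ [_ H]]]]. apply H. Qed.

Lemma tight_filter {P F} : is_tight m P F -> is_filter m P F.
Proof. intros [H _]. exact H. Qed.

Lemma Tc_tight {P U F} : Tc m P U -> U F -> is_tight m P F.
Proof. intros [[H _] _]. apply H. Qed.

Record filter_homeo (P Q : A -> Prop) (DP DQ : (A -> Prop) -> Prop)
    (F H : (A -> Prop) -> (A -> Prop)) : Prop := {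
  fh_fwd : forall x, is_filter m P x -> DP x -> is_filter m Q (F x) /\ DQ (F x) /\ H (F x) = x;
  fh_bwd : forall z, is_filter m Q z -> DQ z -> is_filter m P (H z) /\ DP (H z) /\ F (H z) = z;
  fh_fwd_mono : forall x x', (forall a, x a -> x' a) -> forall a, F x a -> F x' a;
  fh_bwd_mono : forall z z', (forall a, z a -> z' a) -> forall a, H z a -> H z' a;
  fh_dom_up : forall x x', DP x -> (forall a, x a -> x' a) -> DP x';
  fh_cod_up : forall z z', DQ z -> (forall a, z a -> z' a) -> DQ z';
  fh_fwd_cont : forall x, is_filter m P x -> DP x -> forall xs ys, basic xs ys (F x) ->
    exists xs' ys', basic xs' ys' x /\
      forall x', is_filter m P x' -> basic xs' ys' x' -> DP x' /\ basic xs ys (F x');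
  fh_bwd_cont : forall z, is_filter m Q z -> DQ z -> forall xs ys, basic xs ys (H z) ->
    exists xs' ys', basic xs' ys' z /\
      forall z', is_filter m Q z' -> basic xs' ys' z' -> DQ z' /\ basic xs ys (H z')
}.
Arguments fh_fwd {P Q DP DQ F H}.
Arguments fh_bwd {P Q DP DQ F H}.
Arguments fh_fwd_mono {P Q DP DQ F H}.
Arguments fh_bwd_mono {P Q DP DQ F H}.
Arguments fh_cod_up {P Q DP DQ F H}.
Arguments fh_fwd_cont {P Q DP DQ F H}.

Lemma filter_homeo_sym {P Q DP DQ F H} :
  filter_homeo P Q DP DQ F H -> filter_homeo Q P DQ DP H F.
Proof. intros []. constructor; assumption. Qed.

Section Transfer.
Context {P Q : A -> Prop} {DP DQ : (A -> Prop) -> Prop} {F H : (A -> Prop) -> (A -> Prop)}.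
Hypothesis fh : filter_homeo P Q DP DQ F H.

Lemma filter_homeo_ultra {x} : is_ultrafilter m P x -> DP x -> is_ultrafilter m Q (F x).
Proof.
  intros [Hx Hmax] HD. destruct (fh_fwd fh x Hx HD) as [HFx [_ HHF]].
  split; [exact HFx |]. intros z Hz Hsub.
  assert (HDz : DQ z) by (apply (fh_cod_up fh (F x)); auto; apply fh; auto).
  destruct (fh_bwd fh z Hz HDz) as [HHz [_ HFH]].
  assert (Hx_Hz : forall a, x a -> H z a).
  { intros a Ha. rewrite <- HHF in Ha. exact (fh_bwd_mono fh _ _ Hsub a Ha). }
  intros a Ha. rewrite <- HFH in Ha. exact (fh_fwd_mono fh _ _ (Hmax _ HHz Hx_Hz) a Ha).
Qed.

Lemma filter_homeo_tight {x} : is_tight m P x -> DP x -> is_tight m Q (F x).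
Proof.
  intros [Hx Htight] HD. destruct (fh_fwd fh x Hx HD) as [HFx _].
  split; [exact HFx |]. intros xs ys Hb.
  destruct (fh_fwd_cont fh x Hx HD xs ys Hb) as [xs' [ys' [Hb' Hnbhd]]].
  destruct (Htight _ _ Hb') as [U [HU HbU]].
  destruct (Hnbhd U (proj1 HU) HbU) as [HDU HbFU].
  exists (F U). split; [apply filter_homeo_ultra |]; assumption.
Qed.

Lemma open_in_preimage {U} : open_in (is_tight m Q) U ->
  open_in (is_tight m P) (fun x => is_tight m P x /\ DP x /\ U (F x)).
Proof.
  intros [_ HUopen]. split; [intros x [Hx _]; exact Hx |].
  intros x [Hxt [HxD HxU]].
  destruct (HUopen _ HxU) as [xs [ys [Hb HbU]]].
  destruct (fh_fwd_cont fh x (tight_filter Hxt) HxD xs ys Hb)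
    as [xs' [ys' [Hb' Hnbhd]]].
  exists xs', ys'. split; [exact Hb' |]. intros eta Heta Hbe.
  destruct (Hnbhd eta (tight_filter Heta) Hbe) as [HD' Hb''].
  split; [exact Heta |]. split; [exact HD' |].
  apply HbU; [apply filter_homeo_tight |]; assumption.
Qed.
End Transfer.

Lemma Tc_preimage {P Q DP DQ F H U} : filter_homeo P Q DP DQ F H ->
  Tc m Q U -> (forall z, U z -> DQ z) -> Tc m P (fun x => is_tight m P x /\ DP x /\ U (F x)).
Proof.
  intros fh [HUo [HUt HUcompact]] HUD.
  assert (fh' := filter_homeo_sym fh).
  split; [apply (open_in_preimage fh), HUo |].
  split; [intros x [Hx _]; exact Hx |].
  intros I C HC Hcov.
  set (C' := fun i z => is_tight m Q z /\ DQ z /\ C i (H z)).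
  assert (HC' : forall i, open_in (is_tight m Q) (C' i))
    by (intro i; apply (open_in_preimage fh'), HC).
  assert (Hcov' : forall z, U z -> exists i, C' i z).
  { intros z Hz. assert (Hzt := HUt z Hz). assert (HzD := HUD z Hz).
    destruct (fh_bwd fh z (tight_filter Hzt) HzD) as [_ [HHD HFH]].
    destruct (Hcov (H z)) as [i Hi].
    { split; [apply (filter_homeo_tight fh'); assumption |].
      split; [exact HHD |]. rewrite HFH. exact Hz. }
    exists i. split; [exact Hzt |]. split; assumption. }
  destruct (HUcompact I C' HC' Hcov') as [l Hl].
  exists l. intros x [Hxt [HxD HxU]].
  destruct (Hl _ HxU) as [i [Hil [_ [_ Hi]]]]. exists i. split; [exact Hil |].
  destruct (fh_fwd fh x (tight_filter Hxt) HxD) as [_ [_ HHF]].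
  rewrite HHF in Hi. exact Hi.
Qed.

Lemma Tc_image {P Q DP DQ F H V} : filter_homeo P Q DP DQ F H ->
  Tc m P V -> (forall x, V x -> DP x) -> Tc m Q (fun z => exists x, V x /\ DP x /\ z = F x).
Proof.
  intros fh HV HVD.
  assert (fh' := filter_homeo_sym fh).
  replace (fun z => exists x, V x /\ DP x /\ z = F x)
    with (fun z => is_tight m Q z /\ DQ z /\ V (H z)).
  { exact (Tc_preimage fh' HV HVD). }
  apply pred_ext. intro z. split.
  - intros [Hzt [HzD HzV]].
    destruct (fh_bwd fh z (tight_filter Hzt) HzD) as [_ [HHD HFH]].
    exists (H z). auto.
  - intros [x [Hx [HxD ->]]].
    assert (Hxt := Tc_tight HV Hx).
    destruct (fh_fwd fh x (tight_filter Hxt) HxD) as [_ [HFD HHF]].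
    split; [apply (filter_homeo_tight fh); assumption |].
    split; [exact HFD |]. rewrite HHF. exact Hx.
Qed.

(* The space of filters is Hausdorff: a filter [x] outside a compact [K] is separated from
   each point of [K] by a single membership condition, and finitely many of these suffice. *)
Lemma compact_complement_nbhd {X K : (A -> Prop) -> Prop} {x} :
  compact_in X K -> ~ K x ->
  exists xs ys, basic xs ys x /\ forall y, X y -> basic xs ys y -> ~ K y.
Proof.
  intros [HKX HK] HKx.
  set (C := fun (i : A * bool) y => X y /\
        (if snd i then x (fst i) /\ ~ y (fst i) else ~ x (fst i) /\ y (fst i))).
  assert (HC : forall i, open_in X (C i)).
  { intros [a []]; split; try (intros y [Hy _]; exact Hy); intros y [Hy Hb]; simpl in Hb.
    - exists [], [a]. split; [split; [intros z [] | intros z [<- | []]; tauto] |].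
      intros eta Heta [_ Hb2]. split; [exact Heta |]. simpl. split; [tauto | apply Hb2; left; reflexivity].
    - exists [a], []. split; [split; [intros z [<- | []]; tauto | intros z []] |].
      intros eta Heta [Hb1 _]. split; [exact Heta |]. simpl. split; [tauto | apply Hb1; left; reflexivity]. }
  assert (Hcov : forall y, K y -> exists i, C i y).
  { intros y Hy. assert (Hdiff : exists a, ~ (x a <-> y a)).
    { apply NNPP. intro Hsame. apply HKx. replace x with y; [exact Hy |].
      apply pred_ext. intro a. apply NNPP. intro Ha. apply Hsame. exists a. tauto. }
    destruct Hdiff as [a Ha]. destruct (classic (x a)) as [Hxa | Hxa].
    - exists (a, true). unfold C. simpl. split; [apply HKX; exact Hy | tauto].
    - exists (a, false). unfold C. simpl. split; [apply HKX; exact Hy | tauto]. }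
  destruct (HK _ C HC Hcov) as [l Hl].
  exists (map fst (filter_prop (fun i => snd i = true /\ x (fst i)) l)),
         (map fst (filter_prop (fun i => snd i = false /\ ~ x (fst i)) l)).
  split.
  - split; intros a Ha; apply in_map_iff in Ha; destruct Ha as [i [<- Hi]];
      apply filter_prop_In in Hi; tauto.
  - intros y Hy [Hb1 Hb2] HKy. destruct (Hl _ HKy) as [[a []] [Hi [_ HCi]]]; simpl in HCi.
    + apply (proj2 HCi), Hb1. apply in_map_iff. exists (a, true).
      split; [reflexivity | apply filter_prop_In; simpl; tauto].
    + apply (Hb2 a); [| tauto]. apply in_map_iff. exists (a, false).
      split; [reflexivity | apply filter_prop_In; simpl; tauto].
Qed.

Lemma basic_app (xs1 ys1 xs2 ys2 : list A) (eta : A -> Prop) :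
  basic (xs1 ++ xs2) (ys1 ++ ys2) eta <-> basic xs1 ys1 eta /\ basic xs2 ys2 eta.
Proof.
  unfold basic. setoid_rewrite in_app_iff. firstorder.
Qed.

Lemma Tc_sinter {P V W} : Tc m P V -> Tc m P W -> Tc m P (sinter V W).
Proof.
  intros [[HVt HVo] HVc] [[HWt HWo] HWc]. split.
  - split; [intros x [Hx _]; apply HVt, Hx |].
    intros x [HxV HxW]. destruct (HVo _ HxV) as [xs1 [ys1 [Hb1 H1]]].
    destruct (HWo _ HxW) as [xs2 [ys2 [Hb2 H2]]].
    exists (xs1 ++ xs2), (ys1 ++ ys2). rewrite basic_app. split; [auto |].
    intros eta Heta Hbe. apply basic_app in Hbe. split; [apply H1 | apply H2]; tauto.
  - split; [intros x [Hx _]; apply HVt, Hx |].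
    intros I C HC Hcov.
    (* cover [V] by the [C i] together with the open complement of [W] *)
    set (C' := fun o : option I => match o with
                                   | Some i => C i
                                   | None => fun x => is_tight m P x /\ ~ W x end).
    assert (HC' : forall o, open_in (is_tight m P) (C' o)).
    { intros [i |]; [apply HC |]. split; [intros x [Hx _]; exact Hx |].
      intros x [Hx HWx]. destruct (compact_complement_nbhd HWc HWx) as [xs [ys [Hb Hall]]].
      exists xs, ys. split; [exact Hb |]. intros eta Heta Hbe. split; [exact Heta | apply Hall; assumption]. }
    assert (Hcov' : forall x, V x -> exists o, C' o x).
    { intros x Hx. destruct (classic (W x)) as [HW | HW].
      - destruct (Hcov x (conj Hx HW)) as [i Hi]. exists (Some i). exact Hi.
      - exists None. split; [apply HVt, Hx | exact HW]. }
    destruct (proj2 HVc _ C' HC' Hcov') as [l Hl].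
    exists (flat_map (fun o => match o with Some i => [i] | None => [] end) l).
    intros x [HxV HxW]. destruct (Hl _ HxV) as [[i |] [Hin Hi]].
    + exists i. split; [| exact Hi]. apply in_flat_map. exists (Some i).
      split; [exact Hin | left; reflexivity].
    + destruct Hi as [_ Hi]. contradiction.
Qed.

Lemma Tc_sunion {P V W} : Tc m P V -> Tc m P W -> Tc m P (sunion V W).
Proof.
  intros [[HVt HVo] HVc] [[HWt HWo] HWc]. split.
  - split; [intros x [Hx | Hx]; auto |].
    intros x [Hx | Hx].
    + destruct (HVo _ Hx) as [xs [ys [Hb Hall]]]. exists xs, ys. split; [exact Hb |]. left. auto.
    + destruct (HWo _ Hx) as [xs [ys [Hb Hall]]]. exists xs, ys. split; [exact Hb |]. right. auto.
  - split; [intros x [Hx | Hx]; auto |].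
    intros I C HC Hcov.
    destruct (proj2 HVc I C HC (fun x Hx => Hcov x (or_introl Hx))) as [l1 H1].
    destruct (proj2 HWc I C HC (fun x Hx => Hcov x (or_intror Hx))) as [l2 H2].
    exists (l1 ++ l2). intros x [Hx | Hx];
      [destruct (H1 _ Hx) as [i [Hi Hc]] | destruct (H2 _ Hx) as [i [Hi Hc]]];
      exists i; rewrite in_app_iff; auto.
Qed.

Lemma Tc_sempty {P} : Tc m P (@sempty _).
Proof. split; split; try (intros x []). intros I C _ _. exists []. intros x []. Qed.
End FilterSpaces.
Arguments filter_homeo {A} m P Q DP DQ F H.

Definition restrict {S : InvSemigroup} {G : Grp} (phi : S -> G) (g : G) (xi : S -> Prop) : S -> Prop :=
  fun x => xi x /\ Eg S G phi g x.
Definition upclose {S : InvSemigroup} (z : S -> Prop) : S -> Prop :=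
  fun x => is_idem S x /\ exists w, z w /\ sleq S w x.
Definition meets {S : InvSemigroup} {G : Grp} (phi : S -> G) (g : G) (xi : S -> Prop) : Prop :=
  exists x, xi x /\ Eg S G phi g x.
Definition phig_filter {S : InvSemigroup} {G : Grp} (phi : S -> G) (g : G) (z : S -> Prop) : S -> Prop :=
  fun y => exists x, z x /\ phig_rel S G phi g x y.

Section FilterTransport.
Context {S : InvSemigroup} {G : Grp} {phi : S -> G}.
Hypothesis Hphi : pure_grading S G phi.
Local Notation "x * y" := (smul S x y).
Local Notation "0" := (szero S).
Local Notation idem := (is_idem S).
Local Notation le := (sleq S).
Local Notation E := (Eg S G phi).
Local Notation rel := (phig_rel S G phi).
Local Notation m := (smul S).

Lemma filter_neq0 {P F x} : is_filter m P F -> P 0 -> F x -> x <> 0.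
Proof.
  intros HF HP Hx ->. destruct HF as [_ [_ [[y [Hy Hny]] [Hup _]]]].
  apply Hny. apply (Hup 0); [exact Hx | exact Hy | apply sleq_zero_l].
Qed.

Lemma Eg_filter_idem {g F x} : is_filter m (E g) F -> F x -> idem x.
Proof. intros HF Hx. exact (Eg_idem (filter_sub HF Hx)). Qed.

Lemma Eg_filter_neq0 {g F x} : is_filter m (E g) F -> F x -> x <> 0.
Proof. intros HF. apply (filter_neq0 HF), Eg_zero. Qed.

Lemma idem_filter_mem {F x} : is_filter m idem F -> F x -> idem x /\ x <> 0.
Proof.
  intros HF Hx. split; [exact (filter_sub HF Hx) |].
  exact (filter_neq0 HF idem_zero Hx).
Qed.

Lemma Eg_filter_smul_mem {g z a x} : is_filter m (E g) z -> z a -> upclose z x -> z (x * a).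
Proof.
  intros Hz Ha [Hx [w [Hw Hwx]]].
  assert (Hai := Eg_filter_idem Hz Ha). assert (Hwi := Eg_filter_idem Hz Hw).
  apply (filter_up (x := w * a) Hz); [exact (filter_meet Hz Hw Ha) | |].
  - apply (Eg_downward (filter_sub Hz Ha)); [| apply sleq_meet_r];
      auto using idem_smul.
  - apply sleq_glb; [| apply sleq_meet_r, Hai].
    apply (sleq_trans (y := w)); [apply sleq_meet_l |]; assumption.
Qed.

Section Restriction.
Context {g : G}.

Lemma restrict_filter {xi} : is_filter m idem xi -> meets phi g xi -> is_filter m (E g) (restrict phi g xi).
Proof.
  intros Hxi [a [Ha HaE]].
  split; [intros x [_ Hx]; exact Hx |].
  split; [exists a; split; assumption |].
  split.
  { exists 0. split; [apply Eg_zero | intros [H0 _]]. exact (proj2 (idem_filter_mem Hxi H0) eq_refl). }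
  split.
  - intros x y [Hx _] Hy Hxy. split; [| exact Hy].
    exact (filter_up Hxi Hx (Eg_idem Hy) Hxy).
  - intros x y [Hx HxE] [Hy _]. split; [exact (filter_meet Hxi Hx Hy) |].
    assert (Hxi' := filter_sub Hxi Hx). assert (Hyi := filter_sub Hxi Hy).
    apply (Eg_downward HxE); [apply idem_smul | apply sleq_meet_l]; assumption.
Qed.

Lemma upclose_restrict {xi} : is_filter m idem xi -> meets phi g xi -> upclose (restrict phi g xi) = xi.
Proof.
  intros Hxi [a [Ha HaE]]. apply pred_ext. intro x. split.
  - intros [Hx [w [[Hw _] Hwx]]]. exact (filter_up Hxi Hw Hx Hwx).
  - intro Hx. assert (Hxi' := filter_sub Hxi Hx). assert (Hai := filter_sub Hxi Ha).
    split; [exact Hxi' |]. exists (x * a). split; [split |].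
    + exact (filter_meet Hxi Hx Ha).
    + apply (Eg_downward HaE); [apply idem_smul | apply sleq_meet_r]; assumption.
    + apply sleq_meet_l; assumption.
Qed.

Lemma upclose_filter {z} : is_filter m (E g) z -> is_filter m idem (upclose z).
Proof.
  intro Hz. destruct (filter_inhabited Hz) as [a Ha].
  assert (Hai := Eg_filter_idem Hz Ha).
  split; [intros x [Hx _]; exact Hx |].
  split; [exists a; split; [exact Hai | exists a; split; [exact Ha | apply sleq_refl, Hai]] |].
  split.
  { exists 0. split; [apply idem_zero |]. intros [_ [w [Hw Hw0]]].
    apply sleq_zero_r in Hw0. subst w. exact (Eg_filter_neq0 Hz Hw eq_refl). }
  split.
  - intros x y [Hx [w [Hw Hwx]]] Hy Hxy. split; [exact Hy |].
    exists w. split; [exact Hw | exact (sleq_trans Hwx Hxy)].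
  - intros x y [Hx [w [Hw Hwx]]] [Hy [w' [Hw' Hwy]]]. split; [apply idem_smul; assumption |].
    assert (Hwi := Eg_filter_idem Hz Hw). assert (Hwi' := Eg_filter_idem Hz Hw').
    exists (w * w'). split; [exact (filter_meet Hz Hw Hw') |].
    apply sleq_glb.
    + apply (sleq_trans (y := w)); [apply sleq_meet_l |]; assumption.
    + apply (sleq_trans (y := w')); [apply sleq_meet_r |]; assumption.
Qed.

Lemma upclose_meets {z} : is_filter m (E g) z -> meets phi g (upclose z).
Proof.
  intro Hz. destruct (filter_inhabited Hz) as [a Ha].
  assert (Hai := Eg_filter_idem Hz Ha).
  exists a. split; [split; [exact Hai | exists a; split; [exact Ha | apply sleq_refl, Hai]] |].
  exact (filter_sub Hz Ha).
Qed.

Lemma restrict_upclose {z} : is_filter m (E g) z -> restrict phi g (upclose z) = z.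
Proof.
  intro Hz. apply pred_ext. intro x. split.
  - intros [[Hx [w [Hw Hwx]]] HxE]. exact (filter_up Hz Hw HxE Hwx).
  - intro Hx. assert (Hxi := Eg_filter_idem Hz Hx).
    split; [split; [exact Hxi | exists x; split; [exact Hx | apply sleq_refl, Hxi]] |].
    exact (filter_sub Hz Hx).
Qed.

Lemma restrict_cont {xi} : meets phi g xi -> forall xs ys, basic xs ys (restrict phi g xi) ->
  exists xs' ys', basic xs' ys' xi /\
    forall xi', basic xs' ys' xi' -> meets phi g xi' /\ basic xs ys (restrict phi g xi').
Proof.
  intros [a [Ha HaE]] xs ys [Hin Hout].
  exists (a :: xs), (filter_prop (E g) ys). split.
  - split.
    + intros x [<- | Hx]; [exact Ha | apply Hin, Hx].
    + intros y Hy Hy'. apply filter_prop_In in Hy. apply (Hout y); [tauto | split; tauto].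
  - intros xi' [Hin' Hout']. split; [exists a; split; [apply Hin'; left; reflexivity | exact HaE] |].
    split.
    + intros x Hx. split; [apply Hin'; right; exact Hx | apply (Hin x Hx)].
    + intros y Hy [Hy1 Hy2]. apply (Hout' y); [apply filter_prop_In; auto | exact Hy1].
Qed.

Lemma upclose_cont {z} : is_filter m (E g) z -> forall xs ys, basic xs ys (upclose z) ->
  exists xs' ys', basic xs' ys' z /\
    forall z', is_filter m (E g) z' -> basic xs' ys' z' -> basic xs ys (upclose z').
Proof.
  intros Hz xs ys [Hin Hout]. destruct (filter_inhabited Hz) as [a Ha].
  assert (Hai := Eg_filter_idem Hz Ha).
  (* an idempotent [x] lies in [upclose z] iff [x a] lies in [z] *)
  exists (a :: map (fun x => x * a) xs), (map (fun y => y * a) (filter_prop idem ys)). split.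
  - split.
    + intros x [<- | Hx]; [exact Ha |]. apply in_map_iff in Hx. destruct Hx as [x0 [<- Hx0]].
      exact (Eg_filter_smul_mem Hz Ha (Hin x0 Hx0)).
    + intros y Hy Hzy. apply in_map_iff in Hy. destruct Hy as [y0 [<- Hy0]].
      apply filter_prop_In in Hy0. destruct Hy0 as [Hy0 Hyi].
      apply (Hout y0 Hy0). split; [exact Hyi |].
      exists (y0 * a). split; [exact Hzy | apply sleq_meet_l; auto].
  - intros z' Hz' [Hin' Hout']. assert (Ha' : z' a) by (apply Hin'; left; reflexivity).
    split.
    + intros x Hx. destruct (Hin x Hx) as [Hxi _]. split; [exact Hxi |]. exists (x * a). split.
      * apply Hin'. right. apply in_map_iff. exists x. auto.
      * apply sleq_meet_l; auto.
    + intros y Hy Hy'. apply (Hout' (y * a)).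
      * apply in_map_iff. exists y.
        split; [reflexivity | apply filter_prop_In; split; [exact Hy | apply Hy']].
      * exact (Eg_filter_smul_mem Hz' Ha' Hy').
Qed.
End Restriction.

Lemma restrict_homeo g : filter_homeo m idem (E g) (meets phi g) (fun _ => True) (restrict phi g) upclose.
Proof.
  constructor.
  - intros xi Hxi Hm.
    split; [exact (restrict_filter Hxi Hm) | split; [exact I | exact (upclose_restrict Hxi Hm)]].
  - intros z Hz _.
    split; [exact (upclose_filter Hz) | split; [exact (upclose_meets Hz) | exact (restrict_upclose Hz)]].
  - intros x x' Hsub a [Ha HaE]. split; auto.
  - intros z z' Hsub a [Ha [w [Hw Hwa]]]. split; [exact Ha | exists w; auto].
  - intros x x' [a [Ha HaE]] Hsub. exists a. auto.
  - auto.
  - intros xi _ Hm xs ys Hb. destruct (restrict_cont Hm xs ys Hb) as [xs' [ys' [Hb' Hall]]].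
    exists xs', ys'. auto.
  - intros z Hz _ xs ys Hb. destruct (upclose_cont Hz xs ys Hb) as [xs' [ys' [Hb' Hall]]].
    exists xs', ys'. auto.
Qed.

Definition phig_fun (g : G) (x : S) : S :=
  match excluded_middle_informative (exists y, rel g x y) with
  | left H => proj1_sig (constructive_indefinite_description _ H)
  | right _ => x
  end.

Lemma phig_fun_spec {g x} : (exists y, rel g x y) -> rel g x (phig_fun g x).
Proof.
  intro H. unfold phig_fun. destruct (excluded_middle_informative _) as [H' | H'];
    [exact (proj2_sig (constructive_indefinite_description _ H')) | contradiction].
Qed.

Lemma phig_rel_ginv_r {g x y} : idem x -> rel (ginv G g) x y -> rel g y x.
Proof. intros Hx Hr. rewrite <- (ginv_involutive g). apply phig_rel_ginv; auto. Qed.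

Lemma phig_rel_total_r {g y} : idem y -> y <> 0 -> E g y -> exists x, rel (ginv G g) y x.
Proof. intros. apply phig_rel_total; auto. rewrite ginv_involutive. auto. Qed.

Section Transport.
Context {g : G}.

Lemma phig_filter_up {z y y'} : is_filter m (E (ginv G g)) z ->
  phig_filter phi g z y -> E g y' -> le y y' -> phig_filter phi g z y'.
Proof.
  intros Hz [x [Hx Hr]] Hy' Hyy'.
  assert (Hxi := Eg_filter_idem Hz Hx). assert (Hx0 := Eg_filter_neq0 Hz Hx).
  destruct (phig_rel_range Hxi Hr) as [Hyi _].
  assert (Hy0 := phig_rel_neq0 Hxi Hx0 Hr).
  assert (Hy'i := Eg_idem Hy').
  assert (Hy'0 : y' <> 0) by (intros ->; apply Hy0, sleq_zero_r, Hyy').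
  destruct (phig_rel_total_r Hy'i Hy'0 Hy') as [x' Hr'].
  destruct (phig_rel_range Hy'i Hr') as [Hx'i Hx'E].
  assert (Hxx' : le x x')
    by exact (phig_rel_monotone Hphi Hy'i Hyi Hy0 Hyy' Hr' (phig_rel_ginv Hphi Hxi Hr)).
  exists x'. split; [exact (filter_up Hz Hx Hx'E Hxx') | apply phig_rel_ginv_r; auto].
Qed.

Lemma phig_filter_filter {z} : is_filter m (E (ginv G g)) z -> is_filter m (E g) (phig_filter phi g z).
Proof.
  intro Hz. split; [| split; [| split; [| split]]].
  - intros y [x [Hx Hr]].
    exact (proj2 (phig_rel_range (Eg_filter_idem Hz Hx) Hr)).
  - destruct (filter_inhabited Hz) as [x Hx].
    destruct (phig_rel_total Hphi g (x := x)) as [y Hy];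
      [exact (Eg_filter_idem Hz Hx) | exact (Eg_filter_neq0 Hz Hx) | exact (filter_sub Hz Hx) |].
    exists y, x. auto.
  - exists 0. split; [apply Eg_zero | intros [x [Hx Hr]]].
    exact (phig_rel_neq0 (Eg_filter_idem Hz Hx) (Eg_filter_neq0 Hz Hx) Hr eq_refl).
  - intros y y' Hy Hy' Hyy'. exact (phig_filter_up Hz Hy Hy' Hyy').
  - (* the image of the meet [x x'] lies below the images of [x] and [x'] *)
    intros y y' [x [Hx Hr]] [x' [Hx' Hr']].
    assert (Hxi := Eg_filter_idem Hz Hx). assert (Hx'i := Eg_filter_idem Hz Hx').
    assert (Hw : z (x * x')) by exact (filter_meet Hz Hx Hx').
    assert (Hwi := Eg_filter_idem Hz Hw). assert (Hw0 := Eg_filter_neq0 Hz Hw).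
    destruct (phig_rel_total Hphi g (x := x * x')) as [v Hv]; auto; [exact (filter_sub Hz Hw) |].
    destruct (phig_rel_range Hxi Hr) as [Hyi HyE].
    destruct (phig_rel_range Hx'i Hr') as [Hy'i _].
    apply (phig_filter_up (y := v) Hz); [exists (x * x'); auto | |].
    + apply (Eg_downward HyE); [apply idem_smul | apply sleq_meet_l]; auto.
    + apply sleq_glb.
      * exact (phig_rel_monotone Hphi Hxi Hwi Hw0 (sleq_meet_l Hxi Hx'i) Hr Hv).
      * exact (phig_rel_monotone Hphi Hx'i Hwi Hw0 (sleq_meet_r Hx'i) Hr' Hv).
Qed.

Lemma phig_filter_ginv {z} : is_filter m (E (ginv G g)) z ->
  phig_filter phi (ginv G g) (phig_filter phi g z) = z.
Proof.
  intro Hz. apply pred_ext. intro x. split.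
  - intros [y [[x0 [Hx0 Hr0]] Hr]].
    assert (Hx0i := Eg_filter_idem Hz Hx0). assert (Hx00 := Eg_filter_neq0 Hz Hx0).
    destruct (phig_rel_range Hx0i Hr0) as [Hyi _].
    assert (Hy0 := phig_rel_neq0 Hx0i Hx00 Hr0).
    assert (Hx0x : x0 = x)
      by exact (phig_rel_functional Hphi Hyi Hy0 (phig_rel_ginv Hphi Hx0i Hr0) Hr).
    subst x0. exact Hx0.
  - intro Hx. assert (Hxi := Eg_filter_idem Hz Hx).
    destruct (phig_rel_total Hphi g (x := x)) as [y Hy];
      [exact Hxi | exact (Eg_filter_neq0 Hz Hx) | exact (filter_sub Hz Hx) |].
    exists y. split; [exists x; auto | apply phig_rel_ginv; auto].
Qed.

(* Membership of [y] in the image filter is membership of its preimage [phig_fun (ginv g) y]. *)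
Lemma phig_filter_cont {z} : is_filter m (E (ginv G g)) z ->
  forall xs ys, basic xs ys (phig_filter phi g z) ->
  exists xs' ys', basic xs' ys' z /\
    forall z', is_filter m (E (ginv G g)) z' -> basic xs' ys' z' -> basic xs ys (phig_filter phi g z').
Proof.
  intros Hz xs ys [Hin Hout].
  set (pre := phig_fun (ginv G g)).
  assert (Hpre : forall z' y x, is_filter m (E (ginv G g)) z' -> z' x -> rel g x y ->
            rel (ginv G g) y (pre y) /\ pre y = x).
  { intros z' y x Hz' Hx Hr.
    assert (Hxi := Eg_filter_idem Hz' Hx). assert (Hx0 := Eg_filter_neq0 Hz' Hx).
    destruct (phig_rel_range Hxi Hr) as [Hyi _].
    assert (Hy0 := phig_rel_neq0 Hxi Hx0 Hr).
    assert (Hinv := phig_rel_ginv Hphi Hxi Hr).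
    assert (Hspec : rel (ginv G g) y (pre y)) by (apply phig_fun_spec; eauto).
    split; [exact Hspec | exact (phig_rel_functional Hphi Hyi Hy0 Hspec Hinv)]. }
  exists (map pre xs), (map pre (filter_prop (fun y => E g y /\ y <> 0) ys)). split.
  - split.
    + intros x Hx. apply in_map_iff in Hx. destruct Hx as [y [<- Hy]].
      destruct (Hin y Hy) as [x [Hx Hr]]. rewrite (proj2 (Hpre z y x Hz Hx Hr)). exact Hx.
    + intros x Hx Hzx. apply in_map_iff in Hx. destruct Hx as [y [<- Hy]].
      apply filter_prop_In in Hy. destruct Hy as [Hy [HyE Hy0]].
      assert (Hyi := Eg_idem HyE).
      apply (Hout y Hy). exists (pre y). split; [exact Hzx |].
      apply phig_rel_ginv_r; [apply Hyi |]. apply phig_fun_spec, phig_rel_total_r; auto.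
  - intros z' Hz' [Hin' Hout']. split.
    + intros y Hy. destruct (Hin y Hy) as [x [Hx Hr]].
      destruct (Hpre z y x Hz Hx Hr) as [Hspec _].
      exists (pre y). split; [apply Hin', in_map_iff; exists y; auto |].
      apply phig_rel_ginv_r; [| exact Hspec].
      exact (proj1 (phig_rel_range (Eg_filter_idem Hz Hx) Hr)).
    + intros y Hy [x [Hx Hr]].
      destruct (Hpre z' y x Hz' Hx Hr) as [_ Hprey].
      assert (Hxi := Eg_filter_idem Hz' Hx).
      apply (Hout' (pre y)); [| rewrite Hprey; exact Hx].
      apply in_map_iff. exists y. split; [reflexivity |]. apply filter_prop_In.
      split; [exact Hy |]. split; [exact (proj2 (phig_rel_range Hxi Hr)) |].
      exact (phig_rel_neq0 Hxi (Eg_filter_neq0 Hz' Hx) Hr).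
Qed.
End Transport.

Lemma phig_homeo g : filter_homeo m (E (ginv G g)) (E g) (fun _ => True) (fun _ => True)
  (phig_filter phi g) (phig_filter phi (ginv G g)).
Proof.
  assert (Hg : forall z, is_filter m (E g) z -> is_filter m (E (ginv G (ginv G g))) z)
    by (intro z; rewrite ginv_involutive; trivial).
  constructor.
  - intros x Hx _. split; [exact (phig_filter_filter Hx) |].
    split; [exact I | exact (phig_filter_ginv Hx)].
  - intros z Hz _. split; [| split; [exact I |]].
    + exact (phig_filter_filter (Hg z Hz)).
    + assert (H := phig_filter_ginv (Hg z Hz)). rewrite ginv_involutive in H. exact H.
  - intros x x' Hsub a [b [Hb Hr]]. exists b. auto.
  - intros x x' Hsub a [b [Hb Hr]]. exists b. auto.
  - auto.
  - auto.
  - intros x Hx _ xs ys Hb. destruct (phig_filter_cont Hx xs ys Hb) as [xs' [ys' [Hb' Hall]]].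
    exists xs', ys'. auto.
  - intros z Hz _ xs ys Hb. destruct (phig_filter_cont (Hg z Hz) xs ys Hb) as [xs' [ys' [Hb' Hall]]].
    exists xs', ys'. split; [exact Hb' |]. intros z' Hz' Hbz'. split; [exact I | apply Hall; auto].
Qed.
End FilterTransport.
Arguments restrict_homeo {S G} phi g.

Definition supported {S : InvSemigroup} {G : Grp} (phi : S -> G) (g : G)
  (V : (S -> Prop) -> Prop) : Prop :=
  forall xi, V xi -> meets phi g xi.

(* [hatphi_rel phi g eta xi]: the tight filter [xi] is the image of [eta] under the
   homeomorphism induced by [phi_g], both read through their traces on [E_(g^-1)] and [E_g]. *)
Definition hatphi_rel {S : InvSemigroup} {G : Grp} (phi : S -> G) (g : G) (eta xi : S -> Prop) : Prop :=
  restrict phi g xi = phig_filter phi g (restrict phi (ginv G g) eta).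

Section PartialAction.
Context {S : InvSemigroup} {G : Grp} {phi : S -> G}.
Hypothesis Hphi : pure_grading S G phi.
Local Notation "x * y" := (smul S x y).
Local Notation idem := (is_idem S).
Local Notation le := (sleq S).
Local Notation E := (Eg S G phi).
Local Notation m := (smul S).
Local Notation "a ** b" := (gmul G a b) (at level 40, left associativity).
Local Notation tightE := (is_tight m idem).
Local Notation filtE := (is_filter m idem).
Local Notation psi := (psi S G phi).
Local Notation Ig := (Ig S G phi).
Local Notation TcE := (TcE S).

Lemma psi_iff g V xi : psi g V xi <-> tightE xi /\ meets phi g xi /\
  exists eta, V eta /\ meets phi (ginv G g) eta /\ hatphi_rel phi g eta xi.
Proof.
  unfold psi, iota, hatphi, rho, hatphi_rel. split.
  - intros [Ht [Hm [zeta [[eta [HV [Hme Hzeta]]] Hxi]]]].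
    split; [exact Ht |]. split; [exact Hm |]. exists eta. split; [exact HV |]. split; [exact Hme |].
    apply pred_ext. intro y. unfold restrict, phig_filter. rewrite Hxi.
    split; intros [x [Hx Hr]]; exists x; split; [apply Hzeta | | apply Hzeta |]; assumption.
  - intros [Ht [Hm [eta [HV [Hme Heq]]]]].
    split; [exact Ht |]. split; [exact Hm |]. exists (restrict phi (ginv G g) eta). split.
    + exists eta. split; [exact HV |]. split; [exact Hme |]. intro x. unfold restrict. tauto.
    + intro y. change (restrict phi g xi y <-> phig_filter phi g (restrict phi (ginv G g) eta) y).
      rewrite Heq. tauto.
Qed.

Lemma hatphi_rel_exists g eta : tightE eta -> meets phi (ginv G g) eta ->
  exists xi, tightE xi /\ meets phi g xi /\ hatphi_rel phi g eta xi.
Proof.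
  intros Ht Hm.
  assert (T1 := filter_homeo_tight (restrict_homeo phi (ginv G g)) Ht Hm).
  assert (T2 := filter_homeo_tight (phig_homeo Hphi g) T1 I).
  exists (upclose (phig_filter phi g (restrict phi (ginv G g) eta))).
  split; [exact (filter_homeo_tight (filter_homeo_sym (restrict_homeo phi g)) T2 I) |].
  split; [exact (upclose_meets (tight_filter T2)) | exact (restrict_upclose (tight_filter T2))].
Qed.

Lemma hatphi_rel_functional g eta xi xi' : filtE xi -> filtE xi' -> meets phi g xi -> meets phi g xi' ->
  hatphi_rel phi g eta xi -> hatphi_rel phi g eta xi' -> xi = xi'.
Proof.
  unfold hatphi_rel. intros Hxi Hxi' Hm Hm' Hr Hr'.
  rewrite <- (upclose_restrict Hxi Hm), <- (upclose_restrict Hxi' Hm'). congruence.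
Qed.

Lemma hatphi_rel_ginv g eta xi : filtE eta -> meets phi (ginv G g) eta ->
  hatphi_rel phi g eta xi -> hatphi_rel phi (ginv G g) xi eta.
Proof.
  unfold hatphi_rel. intros Heta Hm Hr. rewrite ginv_involutive, Hr. symmetry.
  apply (phig_filter_ginv Hphi), (restrict_filter Heta Hm).
Qed.

Lemma hatphi_rel_injective g eta eta' xi : filtE eta -> filtE eta' ->
  meets phi (ginv G g) eta -> meets phi (ginv G g) eta' ->
  hatphi_rel phi g eta xi -> hatphi_rel phi g eta' xi -> eta = eta'.
Proof.
  intros. apply (hatphi_rel_functional (ginv G g) xi); auto; apply hatphi_rel_ginv; auto.
Qed.

Lemma hatphi_rel_meets_gmul g t eta xi : filtE eta -> meets phi (ginv G g) eta -> meets phi t eta ->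
  hatphi_rel phi g eta xi -> meets phi (g ** t) xi.
Proof.
  intros Heta [a [Ha HaE]] [b [Hb HbE]] Hr.
  assert (Hc : eta (a * b)) by exact (filter_meet Heta Ha Hb).
  destruct (idem_filter_mem Heta Ha) as [Hai _]. destruct (idem_filter_mem Heta Hb) as [Hbi _].
  destruct (idem_filter_mem Heta Hc) as [Hci Hc0].
  assert (Hc1 : E (ginv G g) (a * b)) by exact (Eg_downward HaE Hci (sleq_meet_l Hai Hbi)).
  assert (Hc2 : E t (a * b)) by exact (Eg_downward HbE Hci (sleq_meet_r Hbi)).
  destruct (phig_rel_total Hphi g Hci Hc0 Hc1) as [y Hy].
  assert (Hxy : restrict phi g xi y) by (rewrite Hr; exists (a * b); split; [split |]; assumption).
  exists y. split; [exact (proj1 Hxy) | exact (phig_rel_Eg_gmul Hphi Hci Hy Hc2)].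
Qed.

Section Composition.
Variables (s t : G) (eta zeta xi : S -> Prop).
Hypotheses (Heta : filtE eta) (Hzeta : filtE zeta) (Hxi : filtE xi).
Hypotheses (Hm_eta : meets phi (ginv G t) eta) (Hm_xi : meets phi s xi).
Hypotheses (Hr_t : hatphi_rel phi t eta zeta) (Hr_s : hatphi_rel phi s zeta xi).

(* Move [y] down to [y b] with [b] in [xi /\ E_s], pull it back to [eta] in two steps and
   compare with the direct preimage of [y] under [phi_(st)]. *)
Lemma comp_restrict_incl y :
  restrict phi (s ** t) xi y -> phig_filter phi (s ** t) (restrict phi (ginv G (s ** t)) eta) y.
Proof.
  destruct Hm_xi as [b [Hb HbE]]. intros [Hy HyE].
  destruct (idem_filter_mem Hxi Hy) as [Hyi Hy0].
  destruct (idem_filter_mem Hxi Hb) as [Hbi _].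
  assert (Hyb : xi (y * b)) by exact (filter_meet Hxi Hy Hb).
  destruct (idem_filter_mem Hxi Hyb) as [Hybi Hyb0].
  assert (Hyb_s : E s (y * b)) by exact (Eg_downward HbE Hybi (sleq_meet_r Hbi)).
  assert (Hyb_st : E (s ** t) (y * b)) by exact (Eg_downward HyE Hybi (sleq_meet_l Hyi Hbi)).
  assert (Hrs : restrict phi s xi (y * b)) by (split; assumption).
  rewrite Hr_s in Hrs. destruct Hrs as [z [[Hz Hz_s] Hzr]].
  destruct (idem_filter_mem Hzeta Hz) as [Hzi Hz0].
  assert (Hz_t : E t z).
  { rewrite <- (ginv_gmulK s t). exact (phig_rel_Eg_gmul Hphi Hybi (phig_rel_ginv Hphi Hzi Hzr) Hyb_st). }
  assert (Hrt : restrict phi t zeta z) by (split; assumption).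
  rewrite Hr_t in Hrt. destruct Hrt as [x [[Hx _] Hxr]].
  destruct (idem_filter_mem Heta Hx) as [Hxi' Hx0].
  assert (Hcomp := phig_rel_comp Hphi Hxi' Hx0 Hxr Hzr).
  destruct (phig_rel_total_r Hphi Hyi Hy0 HyE) as [x1 Hx1].
  destruct (phig_rel_range Hyi Hx1) as [Hx1i Hx1E].
  assert (Hxx1 : le x x1)
    by exact (phig_rel_monotone Hphi Hyi Hybi Hyb0 (sleq_meet_l Hyi Hbi) Hx1 (phig_rel_ginv Hphi Hxi' Hcomp)).
  exists x1. split; [split; [exact (filter_up Heta Hx Hx1i Hxx1) | exact Hx1E] |].
  exact (phig_rel_ginv_r Hphi Hyi Hx1).
Qed.

Lemma comp_phig_filter_incl y :
  phig_filter phi (s ** t) (restrict phi (ginv G (s ** t)) eta) y -> restrict phi (s ** t) xi y.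
Proof.
  destruct Hm_eta as [a [Ha HaE]]. intros [x [[Hx HxE] Hr]].
  destruct (idem_filter_mem Heta Hx) as [Hxi' Hx0].
  destruct (idem_filter_mem Heta Ha) as [Hai _].
  assert (Hxa : eta (x * a)) by exact (filter_meet Heta Hx Ha).
  destruct (idem_filter_mem Heta Hxa) as [Hxai Hxa0].
  assert (Hxa_st : E (ginv G (s ** t)) (x * a)) by exact (Eg_downward HxE Hxai (sleq_meet_l Hxi' Hai)).
  assert (Hxa_t : E (ginv G t) (x * a)) by exact (Eg_downward HaE Hxai (sleq_meet_r Hai)).
  destruct (phig_rel_total Hphi t Hxai Hxa0 Hxa_t) as [z Hz].
  assert (Hzt : phig_filter phi t (restrict phi (ginv G t) eta) z)
    by (exists (x * a); split; [split |]; assumption).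
  rewrite <- Hr_t in Hzt. destruct Hzt as [Hzz _].
  destruct (idem_filter_mem Hzeta Hzz) as [Hzi Hz0].
  assert (Hz_s : E (ginv G s) z).
  { rewrite <- (gmul_ginv_gmul s t). exact (phig_rel_Eg_gmul Hphi Hxai Hz Hxa_st). }
  destruct (phig_rel_total Hphi s Hzi Hz0 Hz_s) as [w Hw].
  assert (Hws : phig_filter phi s (restrict phi (ginv G s) zeta) w)
    by (exists z; split; [split |]; assumption).
  rewrite <- Hr_s in Hws. destruct Hws as [Hwxi _].
  destruct (phig_rel_range Hxi' Hr) as [Hyi HyE].
  assert (Hwy : le w y)
    by exact (phig_rel_monotone Hphi Hxi' Hxai Hxa0 (sleq_meet_l Hxi' Hai) Hr
                (phig_rel_comp Hphi Hxai Hxa0 Hz Hw)).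
  split; [exact (filter_up Hxi Hwxi Hyi Hwy) | exact HyE].
Qed.
End Composition.

Lemma hatphi_rel_comp s t eta zeta xi : filtE eta -> filtE zeta -> filtE xi ->
  meets phi (ginv G t) eta -> meets phi s xi ->
  hatphi_rel phi t eta zeta -> hatphi_rel phi s zeta xi -> hatphi_rel phi (s ** t) eta xi.
Proof.
  intros Heta Hzeta Hxi Hm_eta Hm_xi Hr_t Hr_s. unfold hatphi_rel. apply pred_ext. intro y. split.
  - exact (comp_restrict_incl s t eta zeta xi Heta Hzeta Hxi Hm_xi Hr_t Hr_s y).
  - exact (comp_phig_filter_incl s t eta zeta xi Heta Hzeta Hxi Hm_eta Hr_t Hr_s y).
Qed.

Lemma Ig_TcE g V : Ig g V -> TcE V /\ supported phi g V.
Proof.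
  intros [U [HU ->]]. split.
  - exact (Tc_preimage (restrict_homeo phi g) HU (fun _ _ => I)).
  - intros xi [_ [Hm _]]. exact Hm.
Qed.

Lemma rho_eq g V : rho S G phi g V = fun z => exists xi, V xi /\ meets phi g xi /\ z = restrict phi g xi.
Proof.
  apply pred_ext. intro z. unfold rho. split.
  - intros [xi [HV [Hm Hz]]]. exists xi. split; [exact HV |]. split; [exact Hm | apply pred_ext, Hz].
  - intros [xi [HV [Hm ->]]]. exists xi. split; [exact HV |]. split; [exact Hm |].
    intro x. unfold restrict. tauto.
Qed.

Lemma rho_TcEg g V : TcE V -> supported phi g V -> TcEg S G phi g (rho S G phi g V).
Proof. intros HV Hs. rewrite rho_eq. exact (Tc_image (restrict_homeo phi g) HV Hs). Qed.

Lemma hatphi_eq g U : hatphi S G phi g U = fun z => exists zeta, U zeta /\ True /\ z = phig_filter phi g zeta.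
Proof.
  apply pred_ext. intro z. unfold hatphi. split.
  - intros [zeta [HU Hz]]. exists zeta. split; [exact HU |]. split; [exact I | apply pred_ext, Hz].
  - intros [zeta [HU [_ ->]]]. exists zeta. split; [exact HU |]. intro y. unfold phig_filter. tauto.
Qed.

Lemma hatphi_TcEg g U : TcEg S G phi (ginv G g) U -> TcEg S G phi g (hatphi S G phi g U).
Proof. intro HU. rewrite hatphi_eq. exact (Tc_image (phig_homeo Hphi g) HU (fun _ _ => I)). Qed.

Lemma Ig_of_TcE g V : TcE V -> supported phi g V -> Ig g V.
Proof.
  intros HV Hs. exists (rho S G phi g V). split; [exact (rho_TcEg g V HV Hs) |].
  apply pred_ext. intro xi. split.
  - intro Hx. split; [exact (Tc_tight HV Hx) |]. split; [exact (Hs xi Hx) |].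
    rewrite rho_eq. exists xi. auto.
  - intros [Ht [Hm Hr]]. rewrite rho_eq in Hr. destruct Hr as [xi' [HV' [Hm' Heq]]].
    assert (Hxi' : filtE xi') by exact (tight_filter (Tc_tight HV HV')).
    replace xi with xi'; [exact HV' |].
    rewrite <- (upclose_restrict Hxi' Hm'), <- (upclose_restrict (tight_filter Ht) Hm).
    f_equal. symmetry. exact Heq.
Qed.

Lemma Ig_iff g V : Ig g V <-> TcE V /\ supported phi g V.
Proof. split; [apply Ig_TcE | intros [HV Hs]; exact (Ig_of_TcE g V HV Hs)]. Qed.

Lemma psi_Ig g V : Ig (ginv G g) V -> Ig g (psi g V).
Proof.
  intro H. destruct (Ig_TcE _ _ H) as [HV Hs].
  exists (hatphi S G phi g (rho S G phi (ginv G g) V)). split; [| reflexivity].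
  apply hatphi_TcEg, rho_TcEg; assumption.
Qed.

Lemma psi_psi_ginv g W : TcE W -> supported phi g W -> psi g (psi (ginv G g) W) = W.
Proof.
  intros HW Hs. apply pred_ext. intro xi. split.
  - intro Hx. apply psi_iff in Hx. destruct Hx as [Ht [Hm [eta [Heta [Hme Hr]]]]].
    apply psi_iff in Heta. destruct Heta as [Het [Hem [zeta [Hz [Hzm Hr']]]]].
    assert (Hfz : filtE zeta) by exact (tight_filter (Tc_tight HW Hz)).
    assert (Hsym := hatphi_rel_ginv _ _ _ Hfz Hzm Hr'). rewrite ginv_involutive in Hsym, Hzm.
    replace xi with zeta; [exact Hz |].
    exact (hatphi_rel_functional g eta zeta xi Hfz (tight_filter Ht) Hzm Hm Hsym Hr).
  - intro Hx. assert (Ht := Tc_tight HW Hx). assert (Hm := Hs _ Hx).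
    assert (Hm' : meets phi (ginv G (ginv G g)) xi) by (rewrite ginv_involutive; exact Hm).
    destruct (hatphi_rel_exists (ginv G g) xi Ht Hm') as [eta [Het [Hem Hr]]].
    apply psi_iff. split; [exact Ht |]. split; [exact Hm |]. exists eta. split.
    + apply psi_iff. split; [exact Het |]. split; [exact Hem |]. exists xi. auto.
    + split; [exact Hem |]. assert (Hsym := hatphi_rel_ginv _ _ _ (tight_filter Ht) Hm' Hr).
      rewrite ginv_involutive in Hsym. exact Hsym.
Qed.

Lemma psi_ginv_psi g V : Ig (ginv G g) V -> psi (ginv G g) (psi g V) = V.
Proof.
  intro H. destruct (Ig_TcE _ _ H) as [HV Hs].
  assert (Hinv := psi_psi_ginv (ginv G g) V HV Hs). rewrite ginv_involutive in Hinv. exact Hinv.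
Qed.

Lemma supported_gone V : TcE V -> supported phi (gone G) V.
Proof.
  intros HV xi Hx. assert (Hf := tight_filter (Tc_tight HV Hx)).
  destruct (filter_inhabited Hf) as [a Ha]. exists a. split; [exact Ha |].
  rewrite (Eg_gone Hphi). exact (filter_sub Hf Ha).
Qed.

Lemma restrict_gone xi : filtE xi -> restrict phi (gone G) xi = xi.
Proof.
  intro Hf. apply pred_ext. intro x. unfold restrict. rewrite (Eg_gone Hphi).
  split; [tauto | intro Hx; split; [exact Hx | exact (filter_sub Hf Hx)]].
Qed.

Lemma phig_filter_gone xi : filtE xi -> phig_filter phi (gone G) xi = xi.
Proof.
  intro Hf. apply pred_ext. intro y. unfold phig_filter. split.
  - intros [x [Hx Hr]]. destruct (idem_filter_mem Hf Hx) as [Hxi Hx0].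
    apply (phig_rel_gone Hphi Hxi Hx0) in Hr. subst y. exact Hx.
  - intro Hy. destruct (idem_filter_mem Hf Hy) as [Hyi Hy0]. exists y. split; [exact Hy |].
    apply (phig_rel_gone Hphi Hyi Hy0). reflexivity.
Qed.

Lemma Ig_ideal g : is_ideal TcE (Ig g).
Proof.
  split; [intros V HV; exact (proj1 (Ig_TcE g V HV)) |].
  split; [apply Ig_of_TcE; [apply Tc_sempty | intros xi []] |].
  split.
  - intros V W HV HW. apply Ig_iff in HV as [HV HsV]. apply Ig_iff in HW as [HW HsW].
    apply Ig_of_TcE; [exact (Tc_sunion HV HW) | intros xi [Hx | Hx]; auto].
  - intros V W HV HW. apply Ig_iff in HV as [HV HsV].
    apply Ig_of_TcE; [exact (Tc_sinter HV HW) | intros xi [Hx _]; auto].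
Qed.

Lemma hatphi_rel_injective_on g V W eta eta' xi : TcE V -> TcE W -> V eta -> W eta' ->
  meets phi (ginv G g) eta -> meets phi (ginv G g) eta' ->
  hatphi_rel phi g eta xi -> hatphi_rel phi g eta' xi -> eta = eta'.
Proof.
  intros HV HW Heta Heta'.
  apply hatphi_rel_injective; apply tight_filter; [exact (Tc_tight HV Heta) | exact (Tc_tight HW Heta')].
Qed.

Lemma psi_sunion g V W : psi g (sunion V W) = sunion (psi g V) (psi g W).
Proof.
  apply pred_ext. intro xi. unfold sunion. rewrite !psi_iff. split.
  - intros [Ht [Hm [eta [[H | H] Hr]]]]; [left | right]; split; auto; split; auto; exists eta; auto.
  - intros [[Ht [Hm [eta [H Hr]]]] | [Ht [Hm [eta [H Hr]]]]];
      split; auto; split; auto; exists eta; unfold sunion; auto.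
Qed.

Lemma psi_sinter g V W : TcE V -> TcE W -> psi g (sinter V W) = sinter (psi g V) (psi g W).
Proof.
  intros HV HW. apply pred_ext. intro xi. unfold sinter. rewrite !psi_iff. split.
  - intros [Ht [Hm [eta [[HVe HWe] Hr]]]]. split; (split; auto; split; auto; exists eta; auto).
  - intros [[Ht [Hm [eta [HVe [Hme Hr]]]]] [_ [_ [eta' [HWe' [Hme' Hr']]]]]].
    split; [exact Ht |]. split; [exact Hm |]. exists eta. split; [split; [exact HVe |] | auto].
    replace eta with eta'; [exact HWe' |].
    exact (hatphi_rel_injective_on g W V eta' eta xi HW HV HWe' HVe Hme' Hme Hr' Hr).
Qed.

Lemma psi_sdiff g V W : TcE V -> TcE W -> psi g (sdiff V W) = sdiff (psi g V) (psi g W).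
Proof.
  intros HV HW. apply pred_ext. intro xi. unfold sdiff. rewrite !psi_iff. split.
  - intros [Ht [Hm [eta [[HVe HWe] [Hme Hr]]]]]. split; [split; auto; split; auto; exists eta; auto |].
    intros [_ [_ [eta' [HWe' [Hme' Hr']]]]]. apply HWe.
    replace eta with eta'; [exact HWe' |].
    exact (hatphi_rel_injective_on g W V eta' eta xi HW HV HWe' HVe Hme' Hme Hr' Hr).
  - intros [[Ht [Hm [eta [HVe [Hme Hr]]]]] Hn]. split; [exact Ht |]. split; [exact Hm |].
    exists eta. split; [split; [exact HVe |] | auto].
    intro HWe. apply Hn. split; [exact Ht |]. split; [exact Hm |]. exists eta. auto.
Qed.

Lemma psi_sempty g : psi g (@sempty _) = @sempty _.
Proof.
  apply pred_ext. intro xi. rewrite psi_iff. split; [intros [_ [_ [eta [[] _]]]] | intros []].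
Qed.

Lemma psi_gba_iso g : is_gba_iso (Ig (ginv G g)) (Ig g) (psi g).
Proof.
  split; [apply psi_Ig |].
  split.
  { intros W HW. exists (psi (ginv G g) W). split.
    - apply psi_Ig. rewrite ginv_involutive. exact HW.
    - apply Ig_TcE in HW as [HW Hs]. exact (psi_psi_ginv g W HW Hs). }
  split.
  { intros V V' HV HV' Heq. rewrite <- (psi_ginv_psi g V HV), <- (psi_ginv_psi g V' HV'). congruence. }
  split; [apply psi_sempty |].
  split; [intros V W _ _; apply psi_sunion |].
  split; intros V W HV HW; apply Ig_TcE in HV as [HV _]; apply Ig_TcE in HW as [HW _].
  - exact (psi_sinter g V W HV HW).
  - exact (psi_sdiff g V W HV HW).
Qed.

Lemma Ig_gone V : Ig (gone G) V <-> TcE V.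
Proof. rewrite Ig_iff. split; [tauto | intro HV; split; [exact HV | exact (supported_gone V HV)]]. Qed.

Lemma psi_gone V : TcE V -> psi (gone G) V = V.
Proof.
  intro HV. apply pred_ext. intro xi. rewrite psi_iff, ginv_gone. split.
  - intros [Ht [Hm [eta [Heta [Hme Hr]]]]]. unfold hatphi_rel in Hr. rewrite ginv_gone in Hr.
    assert (Hfe : filtE eta) by exact (tight_filter (Tc_tight HV Heta)).
    rewrite (restrict_gone _ Hfe), (restrict_gone _ (tight_filter Ht)), (phig_filter_gone _ Hfe) in Hr.
    subst eta. exact Heta.
  - intro Hx. assert (Ht := Tc_tight HV Hx). assert (Hm := supported_gone V HV xi Hx).
    split; [exact Ht |]. split; [exact Hm |]. exists xi. split; [exact Hx |]. split; [exact Hm |].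
    unfold hatphi_rel. rewrite ginv_gone, (restrict_gone _ (tight_filter Ht)).
    rewrite (phig_filter_gone _ (tight_filter Ht)). reflexivity.
Qed.

Lemma Ig_psi_compat s t W : (exists V, Ig (ginv G s) V /\ Ig t V /\ psi s V = W) <->
  Ig s W /\ Ig (s ** t) W.
Proof.
  split.
  - intros [V [HVs [HVt <-]]]. split; [exact (psi_Ig s V HVs) |].
    apply Ig_of_TcE; [exact (proj1 (Ig_TcE _ _ (psi_Ig s V HVs))) |].
    intros xi Hx. apply psi_iff in Hx as [_ [_ [eta [Heta [Hme Hr]]]]].
    apply Ig_TcE in HVt as [HV HsV].
    exact (hatphi_rel_meets_gmul s t eta xi (tight_filter (Tc_tight HV Heta)) Hme (HsV eta Heta) Hr).
  - intros [HWs HWst]. apply Ig_TcE in HWs as [HW Hs]. apply Ig_TcE in HWst as [_ Hst].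
    exists (psi (ginv G s) W).
    assert (HV : Ig (ginv G s) (psi (ginv G s) W))
      by (apply psi_Ig; rewrite ginv_involutive; apply Ig_of_TcE; auto).
    split; [exact HV |]. split; [| exact (psi_psi_ginv s W HW Hs)].
    apply Ig_of_TcE; [exact (proj1 (Ig_TcE _ _ HV)) |].
    intros eta Heta. apply psi_iff in Heta as [_ [_ [zeta [Hz [Hzm Hr]]]]].
    rewrite <- (ginv_gmulK s t).
    exact (hatphi_rel_meets_gmul (ginv G s) (s ** t) zeta eta (tight_filter (Tc_tight HW Hz))
             Hzm (Hst zeta Hz) Hr).
Qed.

Lemma psi_gmul s t V : Ig (ginv G t) V -> Ig (ginv G (s ** t)) V ->
  psi s (psi t V) = psi (s ** t) V.
Proof.
  intros HVt HVst. apply Ig_TcE in HVt as [HV Hst]. apply Ig_TcE in HVst as [_ Hsst].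
  apply pred_ext. intro xi. rewrite !psi_iff. split.
  - intros [Ht [Hm [zeta [Hz [Hzm Hr]]]]]. apply psi_iff in Hz as [Hzt [Hzm_t [eta [Heta [Hem Hr']]]]].
    assert (Hfe : filtE eta) by exact (tight_filter (Tc_tight HV Heta)).
    split; [exact Ht |]. split.
    + exact (hatphi_rel_meets_gmul s t zeta xi (tight_filter Hzt) Hzm Hzm_t Hr).
    + exists eta. split; [exact Heta |]. split; [exact (Hsst eta Heta) |].
      exact (hatphi_rel_comp s t eta zeta xi Hfe (tight_filter Hzt) (tight_filter Ht) Hem Hm Hr' Hr).
  - intros [Ht [Hm [eta [Heta [Hem Hr]]]]].
    assert (Het := Tc_tight HV Heta). assert (Hmt := Hst eta Heta).
    destruct (hatphi_rel_exists t eta Het Hmt) as [zeta [Hzt [Hzm Hrz]]].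
    assert (Hzs : meets phi (ginv G s) zeta).
    { rewrite <- (gmul_ginv_gmul s t).
      exact (hatphi_rel_meets_gmul t _ eta zeta (tight_filter Het) Hmt Hem Hrz). }
    destruct (hatphi_rel_exists s zeta Hzt Hzs) as [xi' [Hxt [Hxm Hrx]]].
    assert (Hrc := hatphi_rel_comp s t eta zeta xi' (tight_filter Het) (tight_filter Hzt)
                     (tight_filter Hxt) Hmt Hxm Hrz Hrx).
    assert (Hxi' : xi = xi').
    { exact (hatphi_rel_functional (s ** t) eta xi xi' (tight_filter Ht) (tight_filter Hxt) Hm
        (hatphi_rel_meets_gmul s t zeta xi' (tight_filter Hzt) Hzs Hzm Hrx) Hr Hrc). }
    subst xi'. split; [exact Ht |]. split; [exact Hxm |]. exists zeta. split; [| auto].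
    apply psi_iff. split; [exact Hzt |]. split; [exact Hzm | exists eta; auto].
Qed.
End PartialAction.

Theorem mainTheorem13 (S : InvSemigroup) (G : Grp) (phi : S -> G)
  (Hphi : @pure_grading S G phi) :
  is_partial_action G (TcE S) (@Ig S G phi) (@psi S G phi).
Proof.
  split; [exact Ig_ideal |].
  split; [exact (psi_gba_iso Hphi) |].
  split; [exact (Ig_gone Hphi) |].
  split; [exact (psi_gone Hphi) |].
  split; [exact (Ig_psi_compat Hphi) |].
  exact (psi_gmul Hphi).
Qed.
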